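(* Let $X$ be a finite set with $|X|\ge5$, $k$ an integer with $5<k<|X|-5$, $\mathfrak{C}$ a nonempty symmetric family of choice functions for $\binom{X}{k}$, $\mathcal{F}$ the set of simple averaging functions for $\mathfrak{C}$, and assume $r(\mathcal{F})=2$. Let $a^*_1\ne a^*_2$ be elements of $X$. Then there is $f^*\in\mathcal{F}_{[2]}$ such that: $f^*(a^*_1,a^*_2)=a^*_2$; for $b_1\ne b_2$ with $\{b_1,b_2\}\subseteq\{a^*_1,a^*_2\}$, $f^*(b_1,b_2)=b_2$; and for $b_1\ne b_2$ with $\{b_1,b_2\}\not\subseteq\{a^*_1,a^*_2\}$, $f^*(b_1,b_2)=b_1$.
   Context: $\binom{X}{k}=\{Y\subseteq X:|Y|=k\}$; choice functions satisfy $c(Y)\in Y$. Symmetric: closed under $c\mapsto\pi*c$, $(\pi*c)(Y)=\pi^{-1}(c(\pi(Y)))$. $\mathcal{F}_{[r]}$: functions $f:X^r\to X$ with $f(a,\dots,a)=a$ such that for all $c_1,\dots,c_r\in\mathfrak{C}$, $Y\mapsto f(c_1(Y),\dots,c_r(Y))$ is in $\mathfrak{C}$. A monarchy is a projection. $r(\mathcal{F})=\min\{r:\text{some } f\in\mathcal{F}_{[r]}\text{ is not a monarchy}\}$. *)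

From mathcomp Require Import all_boot all_fingroup.
Set Implicit Arguments. Unset Strict Implicit. Unset Printing Implicit Defensive.

Notation ksub X k := {Y : {set X} | #|Y| == k}.

Definition is_choice (X : finType) (k : nat) (c : {ffun ksub X k -> X}) : Prop :=
  forall Y : ksub X k, c Y \in val Y.

(* The image pi(Y) as a k-subset (|pi(Y)| = |Y| since pi is injective). *)
Definition ksub_img (X : finType) (k : nat) (pi : {perm X}) (Y : ksub X k)
  : ksub X k := insubd Y (pi @: val Y).

Definition perm_act (X : finType) (k : nat) (pi : {perm X})
  (c : {ffun ksub X k -> X}) : {ffun ksub X k -> X} :=
  [ffun Y => (pi^-1)%g (c (ksub_img pi Y))].

Definition symmetric_family (X : finType) (k : nat)
  (C : {set {ffun ksub X k -> X}}) : Prop :=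
  forall (pi : {perm X}) c, c \in C -> perm_act pi c \in C.

Definition in_F (X : finType) (k r : nat) (C : {set {ffun ksub X k -> X}})
  (f : {ffun 'I_r -> X} -> X) : Prop :=
  (forall a : X, f [ffun _ => a] = a) /\
  (forall cs : 'I_r -> {ffun ksub X k -> X},
     (forall i, cs i \in C) ->
     [ffun Y => f [ffun i => cs i Y]] \in C).

Definition monarchy (X : finType) (r : nat) (f : {ffun 'I_r -> X} -> X) : Prop :=
  exists i : 'I_r, forall x, f x = x i.

Definition rF_eq (X : finType) (k : nat) (C : {set {ffun ksub X k -> X}})
  (n : nat) : Prop :=
  0 < n /\
  (exists f, in_F C f /\ ~ monarchy (r := n) f) /\
  (forall r, 0 < r < n -> forall f, in_F (r := r) C f -> monarchy f).

Definition pair2 (X : finType) (b1 b2 : X) : {ffun 'I_2 -> X} :=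
  [ffun i : 'I_2 => if val i == 0 then b1 else b2].

From mathcomp Require Import all_boot all_fingroup zify.
From Stdlib Require Import Classical.
Set Implicit Arguments. Unset Strict Implicit. Unset Printing Implicit Defensive.

(* Every f in F_[2] is conservative, f(u,v) in {u,v}: otherwise take a k-set containing
   u and v but not f(u,v), and choice functions of C picking u and v there.  Say that
   (a,b) forces (c,d) when every f in F_[2] choosing b at (a,b) chooses d at (c,d).
   Forcing is transitive, invariant under permutations of X (C is symmetric) and, by
   conservativity, reversible: if (a,b) forces (c,d) then (d,c) forces (b,a).  With five
   points these rules spread one forcing between pairs that are neither equal nor reversed
   to a forcing between any two pairs, which makes every f in F_[2] a monarchy; this
   contradicts r(F) = 2.  Hence for every pair (c,d) other than (a1,a2), (a2,a1) some
   f in F_[2] takes the second coordinate at (a1,a2), (a2,a1) and the first at (c,d), and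
   composing such operations as z |-> g(z_1, h(z)) accumulates the first-coordinate
   choices into f*. *)

Lemma exists_subset_card (T : finType) (B : {set T}) n :
  n <= #|B| -> exists2 A : {set T}, A \subset B & #|A| = n.
Proof.
move=> leB; have : 0 < #|[set A : {set T} | A \subset B & #|A| == n]|.
  by rewrite cards_draws bin_gt0.
by case/card_gt0P => A; rewrite inE => /andP[sAB /eqP cA]; exists A.
Qed.

Lemma exists_notin (T : finType) (s : seq T) : size s < #|T| -> exists x, x \notin s.
Proof.
move=> ltsT; apply/existsP; apply: contraTT ltsT => /existsPn sT.
rewrite -leqNgt (leq_trans _ (card_size s)) // subset_leq_card //.
by apply/subsetP => x _; apply/negbNE/sT.
Qed.

Lemma exists_perm_map (T : finType) (s t : seq T) :
  uniq s -> uniq t -> size s = size t -> exists p : {perm T}, map p s = t.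
Proof.
elim: s t => [|x s IH] [|y t] //=; first by exists 1%g.
move=> /andP[xs us] /andP[yt ut] [st].
have [p pst] := IH t us ut st.
exists (p * tperm (p x) y)%g; rewrite permM tpermL; congr cons.
rewrite -pst; apply/eq_in_map => z zs /=; rewrite permM tpermD //.
  by apply: contraNneq xs => /perm_inj ->.
by apply: contraNneq yt => ->; rewrite -pst map_f.
Qed.

Section KSubsets.

Variables (X : finType) (k : nat).

Lemma exists_ksub_between (A D : {set X}) :
  A \subset D -> #|A| <= k <= #|D| ->
  exists Y : ksub X k, A \subset val Y /\ val Y \subset D.
Proof.
move=> sAD /andP[leAk lekD].
have [B sB cB] : exists2 B : {set X}, B \subset D :\: A & #|B| = k - #|A|.
  by apply: exists_subset_card; rewrite cardsD (setIidPr sAD) leq_sub2r.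
move: sB; rewrite subsetD disjoint_sym => /andP[sBD /disjoint_setI0 AB0].
have cY : #|A :|: B| == k by rewrite cardsU AB0 cards0 cB; apply/eqP; lia.
exists (exist (fun Y : {set X} => #|Y| == k) _ cY).
by rewrite /= subsetUl subUset sAD sBD.
Qed.

Lemma ksub_imgE (s : {perm X}) (Y : ksub X k) : val (ksub_img s Y) = s @: val Y.
Proof. by rewrite val_insubd card_imset ?(valP Y) //; exact: perm_inj. Qed.

Lemma ksub_imgK (s : {perm X}) : cancel (@ksub_img X k s) (ksub_img s^-1).
Proof.
move=> Y; apply: val_inj; rewrite !ksub_imgE -imset_comp.
by rewrite (eq_imset (g := id)) ?imset_id // => x /=; rewrite permK.
Qed.

End KSubsets.

Section Pairs.

Variable X : finType.

Lemma pair2_ord0 (a b : X) : pair2 a b ord0 = a.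
Proof. by rewrite ffunE. Qed.

Lemma pair2_ord_max (a b : X) : pair2 a b ord_max = b.
Proof. by rewrite ffunE. Qed.

Lemma pair2_eta (z : {ffun 'I_2 -> X}) : pair2 (z ord0) (z ord_max) = z.
Proof.
by apply/ffunP => -[[|[|//]] lt_i2]; rewrite ffunE; congr (z _); apply: val_inj.
Qed.

Lemma pair2_diag (a : X) : pair2 a a = [ffun => a].
Proof. by apply/ffunP => i; rewrite !ffunE if_same. Qed.

Lemma map_pair2 (g : X -> X) (a b : X) : [ffun i => g (pair2 a b i)] = pair2 (g a) (g b).
Proof. by apply/ffunP => i; rewrite !ffunE; case: ifP. Qed.

End Pairs.

Section Clone.

Variables (X : finType) (k : nat) (C : {set {ffun ksub X k -> X}}).

Lemma in_F_diag (f : {ffun 'I_2 -> X} -> X) : in_F C f -> forall a, f (pair2 a a) = a.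
Proof. by move=> [f_id _] a; rewrite pair2_diag. Qed.

Lemma in_F_proj r (i : 'I_r) : in_F C (fun z : {ffun 'I_r -> X} => z i).
Proof.
split=> [a|cs csC]; first by rewrite ffunE.
by rewrite (_ : [ffun Y => _] = cs i) //; apply/ffunP => Y; rewrite !ffunE.
Qed.

Lemma in_F_comp2 r (f : {ffun 'I_2 -> X} -> X) (g1 g2 : {ffun 'I_r -> X} -> X) :
  in_F C f -> in_F C g1 -> in_F C g2 -> in_F C (fun z => f (pair2 (g1 z) (g2 z))).
Proof.
move=> [f_id f_cl] [g1_id g1_cl] [g2_id g2_cl]; split=> [a|cs csC].
  by rewrite g1_id g2_id pair2_diag f_id.
pose d (j : 'I_2) := [ffun Y => (if val j == 0 then g1 else g2) [ffun i => cs i Y]].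
rewrite (_ : [ffun Y => _] = [ffun Y => f [ffun j => d j Y]]).
  by apply: f_cl => -[[|j] ?]; [exact: g1_cl | exact: g2_cl].
by apply/ffunP => Y; rewrite !ffunE; congr f; apply/ffunP => j; rewrite !ffunE; case: ifP.
Qed.

Hypothesis C_sym : symmetric_family C.

Lemma in_F_conj r (s : {perm X}) (f : {ffun 'I_r -> X} -> X) :
  in_F C f -> in_F C (fun z => (s^-1)%g (f [ffun i => s (z i)])).
Proof.
move=> [f_id f_cl]; split=> [a|cs csC].
  rewrite (_ : [ffun i => _] = [ffun => s a]) ?f_id ?permK //.
  by apply/ffunP => i; rewrite !ffunE.
pose ds i := perm_act s^-1 (cs i).
rewrite (_ : [ffun Y => _] = perm_act s [ffun Y => f [ffun i => ds i Y]]).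
  by apply/C_sym/f_cl => i; apply: C_sym.
apply/ffunP => Y; rewrite !ffunE; congr (_ (f _)); apply/ffunP => i.
by rewrite !ffunE invgK ksub_imgK.
Qed.

End Clone.

Section Conservative.

Variables (X : finType) (k : nat) (C : {set {ffun ksub X k -> X}}).
Hypotheses (C_neq0 : C != set0) (C_choice : forall c, c \in C -> is_choice c)
  (C_sym : symmetric_family C).

Lemma choice_at (Y : ksub X k) u : u \in val Y -> exists2 c, c \in C & c Y = u.
Proof.
move=> uY; case/set0Pn: C_neq0 => c cC.
exists (perm_act (tperm (c Y) u) c); first exact: C_sym.
have tY : ksub_img (tperm (c Y) u) Y = Y.
  apply: val_inj; rewrite ksub_imgE; apply/eqP.
  rewrite eqEcard card_imset ?leqnn ?andbT; last exact: perm_inj.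
  apply/subsetP => _ /imsetP[x xY ->]; by case: tpermP => // _; apply: C_choice.
by rewrite /perm_act ffunE tY tpermV tpermL.
Qed.

Lemma in_F2_mem (f : {ffun 'I_2 -> X} -> X) (Y : ksub X k) u v :
  in_F C f -> u \in val Y -> v \in val Y -> f (pair2 u v) \in val Y.
Proof.
move=> [_ f_cl] uY vY.
have [c1 c1C <-] := choice_at uY; have [c2 c2C <-] := choice_at vY.
pose cs (j : 'I_2) := if val j == 0 then c1 else c2.
have csC j : cs j \in C by rewrite /cs; case: ifP.
have /C_choice /(_ Y) := f_cl cs csC.
rewrite ffunE (_ : [ffun j => cs j Y] = pair2 (c1 Y) (c2 Y)) //.
by apply/ffunP => j; rewrite !ffunE /cs; case: ifP.
Qed.

Hypotheses (k_gt1 : 1 < k) (k_lt : k < #|X|).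

Lemma in_F2_conservative (f : {ffun 'I_2 -> X} -> X) :
  in_F C f -> forall u v, f (pair2 u v) = u \/ f (pair2 u v) = v.
Proof.
move=> fF u v; set w := f (pair2 u v).
have [|wu] := eqVneq w u; first by left.
have [|wv] := eqVneq w v; first by right.
have suvw : [set u; v] \subset ~: [set w].
  by rewrite subUset !sub1set !in_setC1 eq_sym wu eq_sym wv.
have card_uvw : #|[set u; v]| <= k <= #|~: [set w]|.
  rewrite cardsC1 cards2; apply/andP; split; last lia.
  by case: (u != v); [exact: k_gt1 | exact: ltnW].
have [Y [suvY sYw]] := exists_ksub_between suvw card_uvw.
suff /(subsetP sYw) : w \in val Y by rewrite in_setC1 eqxx.
by apply: in_F2_mem => //; apply: (subsetP suvY); rewrite !inE eqxx ?orbT.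
Qed.

End Conservative.

Ltac solve_uniq :=
  repeat match goal with
  | H : is_true (uniq _) |- _ => move: H; rewrite /= ?inE ?negb_or => H
  | H : is_true (~~ (_ \in _)) |- _ => move: H; rewrite !inE ?negb_or => H
  | H : is_true (_ && _) |- _ => case/andP: H => ? ?
  end;
  rewrite /= ?inE ?negb_or ?andbT; repeat (apply/andP; split); by [|rewrite eq_sym].

Section Forcing.

Variables (X : finType) (k : nat) (C : {set {ffun ksub X k -> X}}).

Definition forces (a b c d : X) :=
  forall h : {ffun 'I_2 -> X} -> X, in_F C h -> h (pair2 a b) = b -> h (pair2 c d) = d.

Lemma forces_trans a b c d e f : forces a b c d -> forces c d e f -> forces a b e f.
Proof. by move=> F1 F2 h hF /(F1 h hF) /(F2 h hF). Qed.

Hypothesis C_sym : symmetric_family C.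

Lemma forces_perm (s : {perm X}) a b c d :
  forces a b c d -> forces (s a) (s b) (s c) (s d).
Proof.
move=> F h hF hab; have := F _ (in_F_conj C_sym s hF).
by rewrite !map_pair2 hab permK => /(_ erefl) /(canRL (permKV s)).
Qed.

Hypothesis C_conservative : forall h : {ffun 'I_2 -> X} -> X, in_F C h ->
  forall u v, h (pair2 u v) = u \/ h (pair2 u v) = v.

Lemma forces_rev a b c d : c != d -> forces a b c d -> forces d c b a.
Proof.
move=> cd F h hF hdc.
pose h' (z : {ffun 'I_2 -> X}) := h (pair2 (z ord_max) (z ord0)).
have h'F : in_F C h' by apply: in_F_comp2; [|exact: in_F_proj ..].
have h'cd : h' (pair2 c d) = c by rewrite /h' pair2_ord0 pair2_ord_max.
case: (C_conservative h'F a b) => h'ab.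
  by move: h'ab; rewrite /h' pair2_ord0 pair2_ord_max.
by case/eqP: cd; rewrite -{1}h'cd; apply: F h'F h'ab.
Qed.

Hypothesis X_ge5 : 5 <= #|X|.

Lemma exists_fresh (s : seq X) : size s <= 4 -> exists e, e \notin s.
Proof. by move=> s_le4; apply: exists_notin; exact: leq_ltn_trans s_le4 X_ge5. Qed.

Lemma forces_triple_transfer x y z x' y' z' : uniq [:: x; y; z] -> uniq [:: x'; y'; z'] ->
  forces x y x z -> forces x' y' x' z'.
Proof.
move=> xyz xyz'; have [p [<- <- <-]] := exists_perm_map xyz xyz' erefl.
exact: forces_perm.
Qed.

Lemma forces_of_triple x y z : uniq [:: x; y; z] -> forces x y x z ->
  forall a b c d, a != b -> c != d -> forces a b c d.
Proof.
move=> xyz F a b c d ab cd.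
have T u v w : uniq [:: u; v; w] -> forces u v u w.
  by move/(forces_triple_transfer xyz); apply.
have [e e_fresh] := exists_fresh (s := [:: a; b; c; d]) isT.
apply: (forces_trans (T a b e _)); first by solve_uniq.
apply: (@forces_trans _ _ c e); last by apply: T; solve_uniq.
have [<- //|ac] := eqVneq a c.
by apply: (forces_rev _ (T e c a _)); solve_uniq.
Qed.

Lemma forces_tail_head a b d : uniq [:: a; b; d] -> forces a b b d -> forces a b a d.
Proof.
move=> abd F; have [e e_fresh] := exists_fresh (s := [:: a; b; d]) isT.
have F' u v w : uniq [:: u; v; w] -> forces u v v w.
  by move=> uvw; have [p [<- <- <-]] := exists_perm_map abd uvw erefl; apply: forces_perm.
apply: (forces_trans (F' a b e _)); first by solve_uniq.
by apply: (forces_trans (F' b e a _)); [|apply: F']; solve_uniq.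
Qed.

Lemma forces_head_tail a b c e : uniq [:: a; b; c] -> e \notin [:: a; b; c] ->
  forces a b c a -> forces b e b a.
Proof.
move=> abc e_fresh F.
have F' u v w : uniq [:: u; v; w] -> forces u v w u.
  by move=> uvw; have [p [<- <- <-]] := exists_perm_map abc uvw erefl; apply: forces_perm.
apply: forces_rev; first by solve_uniq.
apply: (forces_trans (F' a b c abc)).
by apply: (forces_trans (F' c a b _)); [|apply: F']; solve_uniq.
Qed.

Lemma forces_disjoint a b c d e : uniq [:: a; b; c; d] -> e \notin [:: a; b; c; d] ->
  forces a b c d -> forces a b a e.
Proof.
move=> abcd e_fresh F.
have cdae : uniq [:: c; d; a; e] by solve_uniq.
have [p [pa pb pc pd]] := exists_perm_map abcd cdae erefl.
by apply: (forces_trans F); have := forces_perm (s := p) F; rewrite pa pb pc pd.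
Qed.

Lemma forces_collapse a b c d : a != b -> c != d ->
  (c, d) \notin [:: (a, b); (b, a)] -> forces a b c d ->
  forall x y z w, x != y -> z != w -> forces x y z w.
Proof.
move=> ab cd; rewrite !inE !xpair_eqE negb_or => /andP[cd_ab cd_ba] F.
suff [x [y [z [xyz Fxyz]]]] : exists x y z, uniq [:: x; y; z] /\ forces x y x z.
  exact: forces_of_triple xyz Fxyz.
have [eq_ca|ne_ca] := eqVneq c a.
  subst c; rewrite eqxx /= in cd_ab.
  by exists a, b, d; split; first by solve_uniq.
have [eq_db|ne_db] := eqVneq d b.
  subst d; exists b, c, a; split; [solve_uniq | exact: forces_rev].
have [eq_cb|ne_cb] := eqVneq c b.
  subst c; rewrite eqxx /= in cd_ba.
  have abd : uniq [:: a; b; d] by solve_uniq.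
  by exists a, b, d; split; last exact: forces_tail_head.
have [eq_da|ne_da] := eqVneq d a.
  subst d; have abc : uniq [:: a; b; c] by solve_uniq.
  have [e e_fresh] := exists_fresh (s := [:: a; b; c]) isT.
  exists b, e, a; split; last exact: forces_head_tail e_fresh F.
  by solve_uniq.
have abcd : uniq [:: a; b; c; d] by solve_uniq.
have [e e_fresh] := exists_fresh (s := [:: a; b; c; d]) isT.
exists a, b, e; split; last exact: forces_disjoint e_fresh F.
by solve_uniq.
Qed.

Section NonMonarchy.

Variable f0 : {ffun 'I_2 -> X} -> X.
Hypotheses (f0F : in_F C f0) (f0_nonmon : ~ monarchy f0).

Lemma exists_unforced : exists u v u' v', [/\ u != v, u' != v' & ~ forces u v u' v'].
Proof.
have nonproj (i : 'I_2) : exists z, f0 z != z i.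
  apply: NNPP => f0_proj; apply: f0_nonmon; exists i => z.
  by apply/eqP; apply: contra_notT f0_proj => ?; exists z.
have [[z fz0] [z' fz1]] := (nonproj ord0, nonproj ord_max).
move: fz0 fz1; rewrite -(pair2_eta z) -(pair2_eta z') pair2_ord0 pair2_ord_max.
set u := z ord0; set v := z ord_max; set u' := z' ord0; set v' := z' ord_max.
move=> f0uv f0u'v'; exists u, v, u', v'; split.
- by apply: contraNneq f0uv => <-; rewrite (in_F_diag f0F).
- by apply: contraNneq f0u'v' => ->; rewrite (in_F_diag f0F).
- move=> F; have f0v : f0 (pair2 u v) = v.
    by case: (C_conservative f0F u v) f0uv => -> //; rewrite eqxx.
  by move: f0u'v'; rewrite (F _ f0F f0v) eqxx.
Qed.

Lemma exists_separating a b c d : a != b -> c != d -> (c, d) \notin [:: (a, b); (b, a)] ->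
  exists2 h, in_F C h & h (pair2 a b) = b /\ h (pair2 c d) = c.
Proof.
move=> ab cd cd_ab; apply: NNPP => nsep.
have F : forces a b c d.
  move=> h hF hab; case: (C_conservative hF c d) => // hcd.
  by case: nsep; exists h.
have [u [v [u' [v' [uv u'v' nF]]]]] := exists_unforced.
exact/nF/(forces_collapse ab cd cd_ab F).
Qed.

Lemma exists_first_at_pair a1 a2 c d : a1 != a2 -> c != d ->
  (c, d) \notin [:: (a1, a2); (a2, a1)] ->
  exists h, [/\ in_F C h, h (pair2 a1 a2) = a2, h (pair2 a2 a1) = a1 & h (pair2 c d) = c].
Proof.
move=> a12 cd cd_a.
have [g1 g1F [g1_12 g1_cd]] := exists_separating a12 cd cd_a.
have cd_a' : (c, d) \notin [:: (a2, a1); (a1, a2)] by move: cd_a; rewrite !inE orbC.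
have a21 : a2 != a1 by rewrite eq_sym.
have [g2 g2F [g2_21 g2_cd]] := exists_separating a21 cd cd_a'.
exists (fun z : {ffun 'I_2 -> X} => g1 (pair2 (g2 z) (z ord_max))); split.
- by apply: in_F_comp2 => //; exact: in_F_proj.
- rewrite pair2_ord_max.
  by case: (C_conservative g2F a1 a2) => ->; rewrite ?g1_12 ?(in_F_diag g1F).
- by rewrite pair2_ord_max g2_21 (in_F_diag g1F).
- by rewrite pair2_ord_max g2_cd g1_cd.
Qed.

Lemma exists_first_at_pairs a1 a2 (s : seq (X * X)) : a1 != a2 ->
  all [pred p | (p.1 != p.2) && (p \notin [:: (a1, a2); (a2, a1)])] s ->
  exists h, [/\ in_F C h, h (pair2 a1 a2) = a2, h (pair2 a2 a1) = a1
                & {in s, forall p, h (pair2 p.1 p.2) = p.1}].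
Proof.
move=> a12; elim: s => [_|[c d] s IHs /= /andP[/andP[cd cd_a] /IHs[h [hF h12 h21 hs]]]].
  exists (fun z : {ffun 'I_2 -> X} => z ord_max).
  by split; rewrite ?pair2_ord_max //; exact: in_F_proj.
have [g [gF g12 g21 gcd]] := exists_first_at_pair a12 cd cd_a.
exists (fun z : {ffun 'I_2 -> X} => g (pair2 (z ord0) (h z))); split.
- by apply: in_F_comp2 => //; exact: in_F_proj.
- by rewrite pair2_ord0 h12.
- by rewrite pair2_ord0 h21.
- move=> p; rewrite inE pair2_ord0 => /predU1P[-> /= | /hs ->].
    by case: (C_conservative hF c d) => ->; rewrite ?gcd ?(in_F_diag gF).
  by rewrite (in_F_diag gF).
Qed.

End NonMonarchy.

End Forcing.

Theorem claim13p4 (X : finType) (k : nat) (C : {set {ffun ksub X k -> X}})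
  (hX : 5 <= #|X|) (hk1 : 5 < k) (hk2 : k + 5 < #|X|)
  (hC0 : C != set0) (hCch : forall c, c \in C -> is_choice c)
  (hsym : symmetric_family C) (hr : rF_eq C 2)
  (a1 a2 : X) (ha : a1 != a2) :
  exists f : {ffun 'I_2 -> X} -> X,
    in_F C f /\
    f (pair2 a1 a2) = a2 /\
    (forall b1 b2 : X, b1 != b2 -> b1 \in [set a1; a2] -> b2 \in [set a1; a2] ->
       f (pair2 b1 b2) = b2) /\
    (forall b1 b2 : X, b1 != b2 -> ~~ ((b1 \in [set a1; a2]) && (b2 \in [set a1; a2])) ->
       f (pair2 b1 b2) = b1).
Proof.
have [k_gt1 k_lt] : 1 < k /\ k < #|X| by split; lia.
have C_cons := in_F2_conservative hC0 hCch hsym k_gt1 k_lt.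
case: hr => _ [[f0 [f0F f0_nonmon]] _].
pose off_a := [pred p : X * X | (p.1 != p.2) && (p \notin [:: (a1, a2); (a2, a1)])].
have [|h [hF h12 h21 h_off]] :=
  exists_first_at_pairs hsym C_cons hX f0F f0_nonmon (s := enum off_a) ha.
  by apply/allP => p; rewrite mem_enum.
exists h; split=> //; split=> //; split=> b1 b2 b12.
- by rewrite !inE => /orP[]/eqP-> /orP[]/eqP->; rewrite ?(in_F_diag hF).
- move=> b_off; apply: (h_off (b1, b2)); rewrite mem_enum inE /= b12 !inE !xpair_eqE.
  by apply: contra b_off => /orP[]/andP[/eqP-> /eqP->]; rewrite !inE !eqxx ?orbT.
Qed.
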